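(* Let $v$ satisfy the standing assumptions and the doubling condition, and let $g(x)=v(1-x^{-1})$. Suppose that for every $q>1$ there exist $A(q)>1$ and $y_0$ such that for all $y>y_0$ and $x>qy$ one has $g(x)>A(q)\,g(y)$. Let $u(z)=\operatorname{Re}\sum_k a_{n_k}z^{n_k}$ be a Hadamard gap series ($n_k$ positive integers, $n_{k+1}\ge\lambda n_k$, $\lambda>1$). If there is $C$ with $|a_{n_k}|\le C g(n_k)$ for all $k$, then $u\in h^\infty_v$.
   Context: Standing assumptions: $v:[0,1)\to[1,\infty)$ is positive, increasing, continuous, $v(0)=1$, $\lim_{r\to1}v(r)=+\infty$. Doubling condition: there is $D\ge1$ with $v(1-d)\le D\,v(1-2d)$ for all $d\in(0,1/2]$. $h^\infty_v$ is the set of real harmonic $u$ on $\mathbb{D}$ with $|u(z)|\le Kv(|z|)$ for some $K>0$. *)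

(* classical reals. Complex numbers are encoded as pairs of reals. *)
From Stdlib Require Import Reals Lra.
Open Scope R_scope.

(* Standing assumptions on the weight v : [0,1) -> [1,oo) (v given on R, only
   its values on [0,1) matter). *)
Definition standing_weight (v : R -> R) : Prop :=
  v 0 = 1 /\
  (forall r, 0 <= r < 1 -> 1 <= v r) /\
  (forall r s, 0 <= r -> r < s -> s < 1 -> v r < v s) /\
  (forall r, 0 <= r < 1 -> forall eps, eps > 0 -> exists delta, delta > 0 /\
      forall s, 0 <= s < 1 -> Rabs (s - r) < delta -> Rabs (v s - v r) < eps) /\
  (forall M, exists r0, 0 <= r0 < 1 /\ forall r, r0 < r < 1 -> v r > M).

Definition doubling (v : R -> R) : Prop :=
  exists D, 1 <= D /\ forall d, 0 < d <= 1/2 -> v (1 - d) <= D * v (1 - 2 * d).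

Definition gfun (v : R -> R) (x : R) : R := v (1 - / x).

(* z^n for z = x + i y, as (Re, Im). *)
Fixpoint cpow (x y : R) (n : nat) : R * R :=
  match n with
  | O => (1, 0)
  | S m => let (p, q) := cpow x y m in (x * p - y * q, x * q + y * p)
  end.

(* Re (a z^n) with a = ar + i ai *)
Definition re_term (ar ai : R) (n : nat) (x y : R) : R :=
  ar * fst (cpow x y n) - ai * snd (cpow x y n).

Definition in_disc (x y : R) : Prop := x * x + y * y < 1.

Definition cont2_at (f : R -> R -> R) (x y : R) : Prop :=
  forall eps, eps > 0 -> exists delta, delta > 0 /\
    forall x' y', Rabs (x' - x) < delta -> Rabs (y' - y) < delta ->
      Rabs (f x' y' - f x y) < eps.

Definition harmonic_disc (u : R -> R -> R) : Prop :=
  exists ux uy uxx uxy uyx uyy : R -> R -> R,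
  forall x y, in_disc x y ->
    derivable_pt_lim (fun t => u t y) x (ux x y) /\
    derivable_pt_lim (fun t => u x t) y (uy x y) /\
    derivable_pt_lim (fun t => ux t y) x (uxx x y) /\
    derivable_pt_lim (fun t => ux x t) y (uxy x y) /\
    derivable_pt_lim (fun t => uy t y) x (uyx x y) /\
    derivable_pt_lim (fun t => uy x t) y (uyy x y) /\
    cont2_at u x y /\ cont2_at ux x y /\ cont2_at uy x y /\
    cont2_at uxx x y /\ cont2_at uxy x y /\ cont2_at uyx x y /\
    cont2_at uyy x y /\
    uxx x y + uyy x y = 0.

Definition in_h_inf_v (v : R -> R) (u : R -> R -> R) : Prop :=
  harmonic_disc u /\
  exists K, K > 0 /\ forall x y, in_disc x y ->
    Rabs (u x y) <= K * v (sqrt (x * x + y * y)).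

(* Put r = |z| and t = 1 - r.  Since |Re (a z^n)| <= |a| r^n, everything follows from the
   bound  sum_k g(n_k) r^(n_k) <= K v(r):  the same majorant, with r slightly enlarged to absorb
   the factors n_k brought down by differentiation, gives convergence, termwise
   differentiability and harmonicity of u.  To prove the bound, split the indices into three
   ranges.  There are at most Y indices with n_k <= Y.  For Y < n_k <= 1/t the growth hypothesis
   makes g(n_k) increase geometrically, so these terms sum to at most A/(A-1) g(1/t) = A/(A-1) v(r).
   For n_k > 1/t, doubling gives g(n_k) <= 2^p (n_k t)^p v(r), and r^(n_k) <= exp(-n_k t) turns
   each term into at most C v(r)/(n_k t), a lacunary series bounded by lambda/(lambda-1). *)

From Stdlib Require Import Reals Lra Lia Psatz ClassicalEpsilon.
Open Scope R_scope.

(** * Convergent series *)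

Lemma Un_cv_ext (u w : nat -> R) l : (forall n, u n = w n) -> Un_cv u l -> Un_cv w l.
Proof.
  intros E H eps Heps; destruct (H eps Heps) as [N HN]; exists N.
  intros n Hn; rewrite <- E; auto.
Qed.

Lemma Un_cv_const c : Un_cv (fun _ => c) c.
Proof. intros eps Heps; exists O; intros; unfold Rdist; rewrite Rminus_diag, Rabs_R0; lra. Qed.

Lemma Rabs_le_inv a b : Rabs a <= b -> - b <= a <= b.
Proof. unfold Rabs; destruct (Rcase_abs a); lra. Qed.

Lemma infinite_sum_ext f g l : (forall k, f k = g k) -> infinite_sum f l -> infinite_sum g l.
Proof. intros E; apply Un_cv_ext; intros; apply sum_eq; auto. Qed.

Lemma infinite_sum_zero : infinite_sum (fun _ => 0) 0.
Proof. apply (Un_cv_ext (fun _ => 0)); [intros N; induction N; simpl; lra | apply Un_cv_const]. Qed.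

Lemma infinite_sum_plus f g a b : infinite_sum f a -> infinite_sum g b ->
  infinite_sum (fun k => f k + g k) (a + b).
Proof.
  intros Hf Hg. apply (Un_cv_ext _ _ _ (fun N => eq_sym (plus_sum f g N))).
  exact (CV_plus _ _ _ _ Hf Hg).
Qed.

Lemma infinite_sum_minus f g a b : infinite_sum f a -> infinite_sum g b ->
  infinite_sum (fun k => f k - g k) (a - b).
Proof.
  intros Hf Hg. apply (Un_cv_ext _ _ _ (fun N => eq_sym (minus_sum f g N))).
  exact (CV_minus _ _ _ _ Hf Hg).
Qed.

Lemma sum_f_R0_scal_l c f N : sum_f_R0 (fun k => c * f k) N = c * sum_f_R0 f N.
Proof. rewrite scal_sum; apply sum_eq; intros; ring. Qed.

Lemma infinite_sum_scal c f a : infinite_sum f a -> infinite_sum (fun k => c * f k) (c * a).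
Proof.
  intros Hf. apply (Un_cv_ext (fun N => c * sum_f_R0 f N)).
  - intros N; symmetry; apply sum_f_R0_scal_l.
  - exact (CV_mult _ _ _ _ (Un_cv_const c) Hf).
Qed.

Lemma infinite_sum_abs_le f c a L : infinite_sum f a -> infinite_sum c L ->
  (forall k, Rabs (f k) <= c k) -> Rabs a <= L.
Proof. intros Hf Hc H; exact (sum_cv_maj c (fun k _ => f k) 0 a L Hf Hc H). Qed.

Lemma infinite_sum_dominated f c : (forall k, Rabs (f k) <= c k) ->
  (exists L, infinite_sum c L) -> exists l, infinite_sum f l.
Proof.
  intros H [L HL].
  destruct (Rseries_CV_comp (fun k => f k + c k) (fun k => 2 * c k)) as [l Hl].
  - intros k; specialize (H k); apply Rabs_le_inv in H; lra.
  - exists (2 * L); apply infinite_sum_scal; auto.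
  - exists (l - L). apply (infinite_sum_ext (fun k => (f k + c k) - c k)); [intros; ring|].
    apply infinite_sum_minus; auto.
Qed.

Lemma infinite_sum_of_bounded_partial_sums f B : (forall k, 0 <= f k) ->
  (forall N, sum_f_R0 f N <= B) -> exists l, infinite_sum f l /\ l <= B.
Proof.
  intros Hpos HB. destruct (growing_cv (sum_f_R0 f)) as [l Hl].
  - intros N; simpl; specialize (Hpos (S N)); lra.
  - exists B; intros x [i ->]; apply HB.
  - exists l; split; [exact Hl|]. eapply Rle_cv_lim; [exact HB | exact Hl | apply Un_cv_const].
Qed.

(* The value of a convergent series; an arbitrary real otherwise. *)
Definition series_sum (f : nat -> R) : R := epsilon (inhabits 0) (infinite_sum f).

Lemma series_sum_spec f : (exists l, infinite_sum f l) -> infinite_sum f (series_sum f).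
Proof. apply epsilon_spec. Qed.

(** * Powers of [z = x + i y] *)

Lemma cpow_S x y m : cpow x y (S m) =
  (x * fst (cpow x y m) - y * snd (cpow x y m), x * snd (cpow x y m) + y * fst (cpow x y m)).
Proof. simpl. destruct (cpow x y m); reflexivity. Qed.

Lemma cpow_norm_sq x y m : fst (cpow x y m) ^ 2 + snd (cpow x y m) ^ 2 = (x * x + y * y) ^ m.
Proof.
  induction m as [|m IH]; [simpl; ring|].
  rewrite cpow_S, <- (tech_pow_Rmult _ m), <- IH; simpl; ring.
Qed.

Lemma cpow_abs_le x y s m : 0 <= s -> x * x + y * y <= s * s ->
  Rabs (fst (cpow x y m)) <= s ^ m /\ Rabs (snd (cpow x y m)) <= s ^ m.
Proof.
  intros Hs Hxy. pose proof (cpow_norm_sq x y m) as Hn.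
  assert (Hp : (x * x + y * y) ^ m <= (s ^ m) ^ 2).
  { rewrite <- pow_mult, Nat.mul_comm, pow_mult. apply pow_incr. simpl; nra. }
  assert (0 <= s ^ m) by (apply pow_le; auto).
  split; apply Rabs_le; nra.
Qed.

Lemma re_term_abs_le a b m x y s : 0 <= s -> x * x + y * y <= s * s ->
  Rabs (re_term a b m x y) <= (Rabs a + Rabs b) * s ^ m.
Proof.
  intros Hs Hxy. destruct (cpow_abs_le x y s m Hs Hxy) as [H1 H2]. unfold re_term.
  eapply Rle_trans; [apply Rabs_triang|]. rewrite Rabs_Ropp, !Rabs_mult.
  pose proof (Rabs_pos a); pose proof (Rabs_pos b). nra.
Qed.

Lemma derivable_pt_lim_eq f x l l' : derivable_pt_lim f x l -> l = l' -> derivable_pt_lim f x l'.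
Proof. intros H <-; exact H. Qed.

(* [m z^m = m z z^(m-1)], also for [m = 0] despite truncated [pred]. *)
Lemma cpow_scaled_pred x y m :
  INR m * fst (cpow x y m) =
    INR m * (x * fst (cpow x y (pred m)) - y * snd (cpow x y (pred m))) /\
  INR m * snd (cpow x y m) =
    INR m * (x * snd (cpow x y (pred m)) + y * fst (cpow x y (pred m))).
Proof. destruct m as [|m]; [simpl; split; ring|]. rewrite cpow_S; simpl; split; ring. Qed.

Lemma cpow_derive_x x y m :
  derivable_pt_lim (fun t => fst (cpow t y m)) x (INR m * fst (cpow x y (pred m))) /\
  derivable_pt_lim (fun t => snd (cpow t y m)) x (INR m * snd (cpow x y (pred m))).
Proof.
  induction m as [|m [IH1 IH2]].
  - split; eapply derivable_pt_lim_eq; try apply derivable_pt_lim_const; simpl; ring.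
  - destruct (cpow_scaled_pred x y m) as [E1 E2]. rewrite S_INR. simpl pred.
    split; eapply derivable_pt_lim_ext; try (intros t; rewrite cpow_S; reflexivity); simpl.
    + eapply derivable_pt_lim_eq.
      { apply derivable_pt_lim_minus; apply derivable_pt_lim_mult;
          eauto using derivable_pt_lim_id, derivable_pt_lim_const. }
      lra.
    + eapply derivable_pt_lim_eq.
      { apply derivable_pt_lim_plus; apply derivable_pt_lim_mult;
          eauto using derivable_pt_lim_id, derivable_pt_lim_const. }
      lra.
Qed.

Lemma cpow_derive_y x y m :
  derivable_pt_lim (fun t => fst (cpow x t m)) y (- (INR m * snd (cpow x y (pred m)))) /\
  derivable_pt_lim (fun t => snd (cpow x t m)) y (INR m * fst (cpow x y (pred m))).
Proof.
  induction m as [|m [IH1 IH2]].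
  - split; eapply derivable_pt_lim_eq; try apply derivable_pt_lim_const; simpl; ring.
  - destruct (cpow_scaled_pred x y m) as [E1 E2]. rewrite S_INR. simpl pred.
    split; eapply derivable_pt_lim_ext; try (intros t; rewrite cpow_S; reflexivity); simpl.
    + eapply derivable_pt_lim_eq.
      { apply derivable_pt_lim_minus; apply derivable_pt_lim_mult;
          eauto using derivable_pt_lim_id, derivable_pt_lim_const. }
      lra.
    + eapply derivable_pt_lim_eq.
      { apply derivable_pt_lim_plus; apply derivable_pt_lim_mult;
          eauto using derivable_pt_lim_id, derivable_pt_lim_const. }
      lra.
Qed.

Lemma re_term_derive_x a b m x y :
  derivable_pt_lim (fun t => re_term a b m t y) x
    (re_term (INR m * a) (INR m * b) (pred m) x y).
Proof.
  destruct (cpow_derive_x x y m) as [H1 H2]. unfold re_term.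
  eapply derivable_pt_lim_eq.
  { apply derivable_pt_lim_minus; apply derivable_pt_lim_mult;
      eauto using derivable_pt_lim_const. }
  cbv beta; ring.
Qed.

Lemma re_term_derive_y a b m x y :
  derivable_pt_lim (fun t => re_term a b m x t) y
    (re_term (- (INR m * b)) (INR m * a) (pred m) x y).
Proof.
  destruct (cpow_derive_y x y m) as [H1 H2]. unfold re_term.
  eapply derivable_pt_lim_eq.
  { apply derivable_pt_lim_minus; apply derivable_pt_lim_mult;
      eauto using derivable_pt_lim_const. }
  cbv beta; ring.
Qed.

(** * Termwise differentiation *)

Lemma Rabs_diff_le_of_derive_bound f f' a b M :
  (forall t, Rabs (t - a) <= Rabs (b - a) -> derivable_pt_lim f t (f' t) /\ Rabs (f' t) <= M) ->
  Rabs (f b - f a) <= M * Rabs (b - a).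
Proof.
  intros H.
  assert (Hseg : forall t, Rmin a b <= t <= Rmax a b -> Rabs (t - a) <= Rabs (b - a)).
  { unfold Rmin, Rmax; destruct (Rle_dec a b); intros t Ht;
      unfold Rabs; repeat destruct Rcase_abs; lra. }
  destruct (MVT_abs f f' a b) as [c [-> Hc]].
  - intros c Hc; apply H, Hseg, Hc.
  - apply Rmult_le_compat_r; [apply Rabs_pos|]. apply H, Hseg, Hc.
Qed.

Lemma taylor_remainder_le G G' G'' x h c :
  (forall t, Rabs (t - x) <= Rabs h ->
     derivable_pt_lim G t (G' t) /\ derivable_pt_lim G' t (G'' t) /\ Rabs (G'' t) <= c) ->
  Rabs (G (x + h) - G x - h * G' x) <= h * h * c.
Proof.
  intros H.
  assert (Hc : 0 <= c).
  { destruct (H x) as [_ [_ Hx]]; [rewrite Rminus_diag, Rabs_R0; apply Rabs_pos|].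
    pose proof (Rabs_pos (G'' x)); lra. }
  replace (h * h * c) with ((c * Rabs h) * Rabs (x + h - x)).
  2:{ replace (x + h - x) with h by ring. rewrite Rmult_assoc, <- Rabs_mult, Rabs_right by nra. ring. }
  set (rem := fun t => G t - G x - (t - x) * G' x).
  replace (G (x + h) - G x - h * G' x) with (rem (x + h) - rem x) by (unfold rem; ring).
  apply (Rabs_diff_le_of_derive_bound rem (fun t => G' t - G' x)).
  intros t Ht. replace (x + h - x) with h in Ht by ring. split.
  - unfold rem. eapply derivable_pt_lim_eq.
    { apply derivable_pt_lim_minus; [apply derivable_pt_lim_minus|apply derivable_pt_lim_mult].
      all: eauto using derivable_pt_lim_const, derivable_pt_lim_id, derivable_pt_lim_minus.
      apply H; auto. }
    cbv beta; ring.
  - eapply Rle_trans.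
    + apply (Rabs_diff_le_of_derive_bound G' G'' x t c).
      intros s Hs. split; apply H; lra.
    + apply Rmult_le_compat_l; auto.
Qed.

Lemma derivable_pt_lim_of_quadratic_remainder f x l d L : d > 0 ->
  (forall h, Rabs h < d -> Rabs (f (x + h) - f x - h * l) <= h * h * L) ->
  derivable_pt_lim f x l.
Proof.
  intros Hd H eps Heps.
  assert (HL : 0 < eps / (Rabs L + 1)) by (apply Rdiv_lt_0_compat; [lra | pose proof (Rabs_pos L); lra]).
  exists (mkposreal _ (Rmin_pos _ _ Hd HL)); simpl. intros h Hh0 Hh.
  assert (Hh1 : Rabs h < d) by (eapply Rlt_le_trans; [exact Hh | apply Rmin_l]).
  assert (Hh2 : Rabs h < eps / (Rabs L + 1)) by (eapply Rlt_le_trans; [exact Hh | apply Rmin_r]).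
  specialize (H h Hh1).
  replace ((f (x + h) - f x) / h - l) with ((f (x + h) - f x - h * l) / h) by (field; auto).
  assert (Hh3 : 0 < Rabs h) by (apply Rabs_pos_lt; auto).
  unfold Rdiv; rewrite Rabs_mult, Rabs_inv.
  replace (h * h) with (Rabs h * Rabs h) in H by (rewrite <- Rabs_mult, Rabs_right by nra; ring).
  apply Rle_lt_trans with (Rabs h * (Rabs L + 1)).
  - apply Rmult_le_reg_r with (Rabs h); auto. rewrite Rmult_assoc, Rinv_l by lra.
    pose proof (Rle_abs L); nra.
  - apply Rmult_lt_reg_r with (/ (Rabs L + 1)); [apply Rinv_0_lt_compat; pose proof (Rabs_pos L); lra|].
    rewrite Rmult_assoc, Rinv_r by (pose proof (Rabs_pos L); lra). lra.
Qed.

Lemma derivable_pt_lim_series (F F' F'' : nat -> R -> R) (S : R -> R) l' c x d : d > 0 ->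
  (forall k t, Rabs (t - x) < d -> derivable_pt_lim (F k) t (F' k t) /\
     derivable_pt_lim (F' k) t (F'' k t) /\ Rabs (F'' k t) <= c k) ->
  (forall t, Rabs (t - x) < d -> infinite_sum (fun k => F k t) (S t)) ->
  infinite_sum (fun k => F' k x) l' -> (exists L, infinite_sum c L) ->
  derivable_pt_lim S x l'.
Proof.
  intros Hd HF HS Hl' [L HL].
  apply (derivable_pt_lim_of_quadratic_remainder _ _ _ d L Hd). intros h Hh.
  assert (Hsum : infinite_sum (fun k => F k (x + h) - F k x - h * F' k x)
                   (S (x + h) - S x - h * l')).
  { apply infinite_sum_minus; [apply infinite_sum_minus|apply infinite_sum_scal; auto];
      apply HS; [replace (x + h - x) with h by ring | rewrite Rminus_diag, Rabs_R0]; lra. }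
  apply (infinite_sum_abs_le _ _ _ _ Hsum (infinite_sum_scal (h * h) _ _ HL)).
  intros k. apply (taylor_remainder_le (F k) (F' k) (F'' k)).
  intros t Ht; apply HF; lra.
Qed.

Lemma cont2_at_of_bounded_partials (U Ux Uy : R -> R -> R) x y d M : d > 0 ->
  (forall x' y', Rabs (x' - x) < d -> Rabs (y' - y) < d ->
     derivable_pt_lim (fun t => U t y') x' (Ux x' y') /\
     derivable_pt_lim (fun t => U x' t) y' (Uy x' y') /\
     Rabs (Ux x' y') <= M /\ Rabs (Uy x' y') <= M) ->
  cont2_at U x y.
Proof.
  intros Hd H eps Heps.
  assert (HM : 0 <= M).
  { destruct (H x y) as [_ [_ [HM _]]]; try (rewrite Rminus_diag, Rabs_R0; lra).
    pose proof (Rabs_pos (Ux x y)); lra. }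
  set (e := eps / (2 * M + 2)).
  assert (He : 0 < e) by (apply Rdiv_lt_0_compat; lra).
  exists (Rmin d e). split; [apply Rmin_pos; auto|].
  intros x' y' Hx Hy.
  pose proof (Rmin_l d e); pose proof (Rmin_r d e).
  assert (Hy' : Rabs (U x' y' - U x' y) <= M * Rabs (y' - y)).
  { apply (Rabs_diff_le_of_derive_bound (fun t => U x' t) (fun t => Uy x' t)).
    intros t Ht. destruct (H x' t) as [_ [? [_ ?]]]; auto; lra. }
  assert (Hx' : Rabs (U x' y - U x y) <= M * Rabs (x' - x)).
  { apply (Rabs_diff_le_of_derive_bound (fun t => U t y) (fun t => Ux t y)).
    intros t Ht. destruct (H t y) as [? [_ [? _]]]; auto; try lra.
    rewrite Rminus_diag, Rabs_R0; lra. }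
  replace (U x' y' - U x y) with ((U x' y' - U x' y) + (U x' y - U x y)) by ring.
  eapply Rle_lt_trans; [apply Rabs_triang|].
  assert (Hsmall : 2 * M * e < eps) by (unfold e; apply Rmult_lt_reg_r with (2 * M + 2);
    [lra | field_simplify; lra]).
  nra.
Qed.

(** * Series [Re (sum_k a_k z^(m_k))] on the disc *)

(* [a_k = coef_re k + i coef_im k] and [m_k = expo k]. *)
Record re_power_series := mk_re_power_series
  { coef_re : nat -> R; coef_im : nat -> R; expo : nat -> nat }.

Definition series_term (b : re_power_series) k x y :=
  re_term (coef_re b k) (coef_im b k) (expo b k) x y.

Definition series_fun (b : re_power_series) x y := series_sum (fun k => series_term b k x y).

(* Coefficients of [d/dx] and [d/dy]: [m_k a_k] and [i m_k a_k] at exponent [m_k - 1]. *)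
Definition deriv_x (b : re_power_series) : re_power_series :=
  mk_re_power_series (fun k => INR (expo b k) * coef_re b k)
    (fun k => INR (expo b k) * coef_im b k) (fun k => pred (expo b k)).

Definition deriv_y (b : re_power_series) : re_power_series :=
  mk_re_power_series (fun k => - (INR (expo b k) * coef_im b k))
    (fun k => INR (expo b k) * coef_re b k) (fun k => pred (expo b k)).

Definition coef_norm (b : re_power_series) k := Rabs (coef_re b k) + Rabs (coef_im b k).

Definition weighted_powers_summable (w : nat -> R) (m : nat -> nat) :=
  forall s, 0 <= s < 1 -> exists l, infinite_sum (fun k => w k * s ^ m k) l.

Definition abs_summable b := weighted_powers_summable (coef_norm b) (expo b).

Lemma coef_norm_nonneg b k : 0 <= coef_norm b k.
Proof. unfold coef_norm; pose proof (Rabs_pos (coef_re b k)); pose proof (Rabs_pos (coef_im b k)); lra. Qed.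

Lemma coef_norm_deriv_x b k : coef_norm (deriv_x b) k = INR (expo b k) * coef_norm b k.
Proof.
  unfold coef_norm, deriv_x; simpl.
  rewrite !Rabs_mult, (Rabs_right (INR _)) by (apply Rle_ge, pos_INR); ring.
Qed.

Lemma coef_norm_deriv_y b k : coef_norm (deriv_y b) k = INR (expo b k) * coef_norm b k.
Proof.
  unfold coef_norm, deriv_y; simpl.
  rewrite Rabs_Ropp, !Rabs_mult, (Rabs_right (INR _)) by (apply Rle_ge, pos_INR); ring.
Qed.

Lemma succ_mul_pow_le t j : 0 <= t < 1 -> INR (S j) * t ^ j * (1 - t) <= 1 - t ^ S j.
Proof.
  intros Ht. induction j as [|j IH]; [simpl; lra|].
  rewrite (S_INR (S j)). simpl pow in *.
  assert (0 <= t ^ j) by (apply pow_le; lra).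
  assert (t ^ j <= 1) by (rewrite <- (pow1 j); apply pow_incr; lra).
  assert (t * (INR (S j) * t ^ j * (1 - t)) <= t * (1 - t * t ^ j)) by (apply Rmult_le_compat_l; lra).
  assert (t * t ^ j * (1 - t) <= 1 * (1 - t)) by (apply Rmult_le_compat_r; nra).
  nra.
Qed.

(* [j s^(j-1) <= K sigma^j] with [sigma = (1+s)/2], by the previous lemma applied to [s/sigma]. *)
Lemma weighted_powers_summable_deriv w m : (forall k, 0 <= w k) ->
  weighted_powers_summable w m ->
  weighted_powers_summable (fun k => INR (m k) * w k) (fun k => pred (m k)).
Proof.
  intros Hw H s Hs.
  set (sg := (1 + s) / 2). set (tau := s / sg).
  assert (Hsg : 0 < sg < 1) by (unfold sg; lra).
  assert (Htau : 0 <= tau < 1).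
  { unfold tau; split; [apply Rmult_le_pos; [lra | left; apply Rinv_0_lt_compat; lra]|].
    apply Rmult_lt_reg_r with sg; [lra|]. unfold Rdiv; rewrite Rmult_assoc, Rinv_l by lra.
    unfold sg; lra. }
  set (K := / ((1 - tau) * sg)).
  assert (HK : 0 < K) by (unfold K; apply Rinv_0_lt_compat; nra).
  assert (Hb : forall j, INR j * s ^ pred j <= K * sg ^ j).
  { intros [|j]; [simpl; rewrite Rmult_0_l; apply Rmult_le_pos; lra|]. simpl pred.
    replace s with (tau * sg) by (unfold tau; field; lra). rewrite Rpow_mult_distr.
    pose proof (succ_mul_pow_le tau j Htau). pose proof (pow_le tau (S j) (proj1 Htau)).
    assert (0 < sg ^ j) by (apply pow_lt; lra).
    replace (K * sg ^ S j) with (sg ^ j / (1 - tau)) by (unfold K; simpl; field; lra).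
    apply Rmult_le_reg_r with (1 - tau); [lra|].
    replace (sg ^ j / (1 - tau) * (1 - tau)) with (sg ^ j) by (field; lra). nra. }
  destruct (H sg (conj (Rlt_le _ _ (proj1 Hsg)) (proj2 Hsg))) as [L HL].
  destruct (Rseries_CV_comp (fun k => INR (m k) * w k * s ^ pred (m k))
              (fun k => K * (w k * sg ^ m k))) as [l Hl].
  - intros k. specialize (Hb (m k)). pose proof (Hw k). pose proof (pos_INR (m k)).
    pose proof (pow_le s (pred (m k)) (proj1 Hs)). split.
    + apply Rmult_le_pos; [apply Rmult_le_pos|]; auto.
    + replace (INR (m k) * w k * s ^ pred (m k)) with (w k * (INR (m k) * s ^ pred (m k))) by ring.
      replace (K * (w k * sg ^ m k)) with (w k * (K * sg ^ m k)) by ring.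
      apply Rmult_le_compat_l; auto.
  - exists (K * L); apply infinite_sum_scal; auto.
  - exists l; exact Hl.
Qed.

Lemma weighted_powers_summable_ext w w' m : (forall k, w k = w' k) ->
  weighted_powers_summable w m -> weighted_powers_summable w' m.
Proof.
  intros E H s Hs. destruct (H s Hs) as [l Hl]. exists l.
  apply (infinite_sum_ext _ _ _ (fun k => f_equal (fun a => a * s ^ m k) (E k)) Hl).
Qed.

Lemma abs_summable_deriv_x b : abs_summable b -> abs_summable (deriv_x b).
Proof.
  intros H. apply (weighted_powers_summable_ext (fun k => INR (expo b k) * coef_norm b k)).
  - intros k; rewrite coef_norm_deriv_x; reflexivity.
  - exact (weighted_powers_summable_deriv _ _ (coef_norm_nonneg b) H).
Qed.

Lemma abs_summable_deriv_y b : abs_summable b -> abs_summable (deriv_y b).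
Proof.
  intros H. apply (weighted_powers_summable_ext (fun k => INR (expo b k) * coef_norm b k)).
  - intros k; rewrite coef_norm_deriv_y; reflexivity.
  - exact (weighted_powers_summable_deriv _ _ (coef_norm_nonneg b) H).
Qed.

Lemma series_term_abs_le b k x y s : 0 <= s -> x * x + y * y <= s * s ->
  Rabs (series_term b k x y) <= coef_norm b k * s ^ expo b k.
Proof. apply re_term_abs_le. Qed.

Lemma series_fun_spec b s x y : abs_summable b -> 0 <= s < 1 -> x * x + y * y <= s * s ->
  infinite_sum (fun k => series_term b k x y) (series_fun b x y).
Proof.
  intros Hb Hs Hxy. apply series_sum_spec.
  apply (infinite_sum_dominated _ (fun k => coef_norm b k * s ^ expo b k)); [|apply Hb; auto].
  intros; apply series_term_abs_le; lra.
Qed.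

Lemma series_fun_abs_le b s : abs_summable b -> 0 <= s < 1 -> exists L,
  forall x y, x * x + y * y <= s * s -> Rabs (series_fun b x y) <= L.
Proof.
  intros Hb Hs. destruct (Hb s Hs) as [L HL]. exists L. intros x y Hxy.
  apply (infinite_sum_abs_le _ _ _ _ (series_fun_spec b s x y Hb Hs Hxy) HL).
  intros; apply series_term_abs_le; lra.
Qed.

Lemma sqrt_lt_one a : 0 <= a < 1 -> sqrt a < 1.
Proof. intros H. rewrite <- sqrt_1 at 1. apply sqrt_lt_1_alt; lra. Qed.

Lemma in_disc_radius x y : in_disc x y ->
  0 <= sqrt (x * x + y * y) < 1 /\ x * x + y * y <= sqrt (x * x + y * y) * sqrt (x * x + y * y).
Proof.
  unfold in_disc; intros H. assert (0 <= x * x + y * y) by nra.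
  rewrite sqrt_sqrt by lra. split; [|lra]. split; [apply sqrt_pos | apply sqrt_lt_one; lra].
Qed.

Lemma series_fun_spec_disc b x y : abs_summable b -> in_disc x y ->
  infinite_sum (fun k => series_term b k x y) (series_fun b x y).
Proof. intros Hb H. destruct (in_disc_radius x y H). eapply series_fun_spec; eauto. Qed.

Lemma sq_le_of_near a a' d : - d <= a' - a <= d -> d <= 1 -> -1 <= a <= 1 ->
  a' * a' <= a * a + 3 * d.
Proof.
  intros H Hd Ha. replace (a' * a') with (a * a + (a' - a) * (2 * a + (a' - a))) by ring.
  destruct (Rle_dec 0 (a' - a)); nra.
Qed.

Lemma in_disc_square_nbhd x y : in_disc x y -> exists s d, 0 <= s < 1 /\ d > 0 /\
  forall x' y', Rabs (x' - x) < d -> Rabs (y' - y) < d -> x' * x' + y' * y' <= s * s.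
Proof.
  unfold in_disc; intros H.
  assert (Hx : -1 <= x <= 1) by (split; nra). assert (Hy : -1 <= y <= 1) by (split; nra).
  remember (x * x + y * y) as r2 eqn:Er2.
  assert (0 <= r2) by nra.
  remember (Rmin 1 ((1 - r2) / 12)) as d eqn:Ed.
  assert (d1 : d <= 1) by (rewrite Ed; apply Rmin_l).
  assert (d2 : d <= (1 - r2) / 12) by (rewrite Ed; apply Rmin_r).
  exists (sqrt ((1 + r2) / 2)), d. split; [split|split].
  - apply sqrt_pos.
  - apply sqrt_lt_one; lra.
  - rewrite Ed; apply Rmin_pos; lra.
  - intros x' y' Hx' Hy'. rewrite sqrt_sqrt by lra.
    apply Rlt_le, Rabs_le_inv in Hx'. apply Rlt_le, Rabs_le_inv in Hy'.
    pose proof (sq_le_of_near x x' d Hx' d1 Hx). pose proof (sq_le_of_near y y' d Hy' d1 Hy).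
    lra.
Qed.

Lemma series_fun_derive_x b x y : abs_summable b -> in_disc x y ->
  derivable_pt_lim (fun t => series_fun b t y) x (series_fun (deriv_x b) x y).
Proof.
  intros Hb H. destruct (in_disc_square_nbhd x y H) as [s [d [Hs [Hd Hn]]]].
  assert (Hy : Rabs (y - y) < d) by (rewrite Rminus_diag, Rabs_R0; lra).
  assert (Hb' := abs_summable_deriv_x b Hb).
  apply (derivable_pt_lim_series (fun k t => series_term b k t y)
    (fun k t => series_term (deriv_x b) k t y) (fun k t => series_term (deriv_x (deriv_x b)) k t y)
    _ _ (fun k => coef_norm (deriv_x (deriv_x b)) k * s ^ expo (deriv_x (deriv_x b)) k) x d Hd).
  - intros k t Ht. split; [|split]; try apply re_term_derive_x.
    apply series_term_abs_le; [lra | apply Hn; auto].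
  - intros t Ht. apply (series_fun_spec b s); auto.
  - apply (series_fun_spec (deriv_x b) s); auto.
    apply Hn; auto. rewrite Rminus_diag, Rabs_R0; lra.
  - apply (abs_summable_deriv_x (deriv_x b)); auto.
Qed.

Lemma series_fun_derive_y b x y : abs_summable b -> in_disc x y ->
  derivable_pt_lim (fun t => series_fun b x t) y (series_fun (deriv_y b) x y).
Proof.
  intros Hb H. destruct (in_disc_square_nbhd x y H) as [s [d [Hs [Hd Hn]]]].
  assert (Hx : Rabs (x - x) < d) by (rewrite Rminus_diag, Rabs_R0; lra).
  assert (Hb' := abs_summable_deriv_y b Hb).
  apply (derivable_pt_lim_series (fun k t => series_term b k x t)
    (fun k t => series_term (deriv_y b) k x t) (fun k t => series_term (deriv_y (deriv_y b)) k x t)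
    _ _ (fun k => coef_norm (deriv_y (deriv_y b)) k * s ^ expo (deriv_y (deriv_y b)) k) y d Hd).
  - intros k t Ht. split; [|split]; try apply re_term_derive_y.
    apply series_term_abs_le; [lra | apply Hn; auto].
  - intros t Ht. apply (series_fun_spec b s); auto.
  - apply (series_fun_spec (deriv_y b) s); auto.
    apply Hn; auto. rewrite Rminus_diag, Rabs_R0; lra.
  - apply (abs_summable_deriv_y (deriv_y b)); auto.
Qed.

Lemma series_fun_cont2 b x y : abs_summable b -> in_disc x y -> cont2_at (series_fun b) x y.
Proof.
  intros Hb H. destruct (in_disc_square_nbhd x y H) as [s [d [Hs [Hd Hn]]]].
  destruct (series_fun_abs_le (deriv_x b) s (abs_summable_deriv_x b Hb) Hs) as [L1 HL1].
  destruct (series_fun_abs_le (deriv_y b) s (abs_summable_deriv_y b Hb) Hs) as [L2 HL2].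
  apply (cont2_at_of_bounded_partials _ (series_fun (deriv_x b)) (series_fun (deriv_y b))
           x y d (Rmax L1 L2) Hd).
  intros x' y' Hx Hy. pose proof (Hn x' y' Hx Hy) as Hxy.
  assert (in_disc x' y') by (unfold in_disc; nra).
  split; [|split; [|split]].
  - apply series_fun_derive_x; auto.
  - apply series_fun_derive_y; auto.
  - eapply Rle_trans; [apply HL1; auto | apply Rmax_l].
  - eapply Rle_trans; [apply HL2; auto | apply Rmax_r].
Qed.

(* Termwise, [Re (m(m-1) a z^(m-2)) + Re (i^2 m(m-1) a z^(m-2)) = 0]. *)
Lemma series_fun_laplacian b x y : abs_summable b -> in_disc x y ->
  series_fun (deriv_x (deriv_x b)) x y + series_fun (deriv_y (deriv_y b)) x y = 0.
Proof.
  intros Hb H.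
  pose proof (infinite_sum_plus _ _ _ _
    (series_fun_spec_disc _ x y (abs_summable_deriv_x _ (abs_summable_deriv_x _ Hb)) H)
    (series_fun_spec_disc _ x y (abs_summable_deriv_y _ (abs_summable_deriv_y _ Hb)) H)) as Hsum.
  apply (uniqueness_sum _ _ _ Hsum).
  apply (infinite_sum_ext (fun _ => 0)).
  - intros k; unfold series_term, re_term; simpl; ring.
  - apply infinite_sum_zero.
Qed.

Lemma series_fun_harmonic b : abs_summable b -> harmonic_disc (series_fun b).
Proof.
  intros Hb.
  exists (series_fun (deriv_x b)), (series_fun (deriv_y b)),
    (series_fun (deriv_x (deriv_x b))), (series_fun (deriv_y (deriv_x b))),
    (series_fun (deriv_x (deriv_y b))), (series_fun (deriv_y (deriv_y b))).
  intros x y H.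
  repeat split; auto using series_fun_derive_x, series_fun_derive_y, series_fun_cont2,
    series_fun_laplacian, abs_summable_deriv_x, abs_summable_deriv_y.
Qed.

Lemma radial_sum_bound (b : re_power_series) w B : (forall k, coef_norm b k <= w k) ->
  (forall s, 0 <= s < 1 -> forall N, sum_f_R0 (fun k => w k * s ^ expo b k) N <= B s) ->
  forall s, 0 <= s < 1 ->
    exists l, infinite_sum (fun k => coef_norm b k * s ^ expo b k) l /\ l <= B s.
Proof.
  intros Hw HB s Hs. apply infinite_sum_of_bounded_partial_sums.
  - intros k; apply Rmult_le_pos; [apply coef_norm_nonneg | apply pow_le; lra].
  - intros N. eapply Rle_trans; [|apply (HB s Hs N)]. apply sum_Rle; intros k _.
    apply Rmult_le_compat_r; [apply pow_le; lra | apply Hw].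
Qed.

Lemma series_fun_abs_le_radial (b : re_power_series) B :
  (forall s, 0 <= s < 1 ->
     exists l, infinite_sum (fun k => coef_norm b k * s ^ expo b k) l /\ l <= B s) ->
  forall x y, in_disc x y -> Rabs (series_fun b x y) <= B (sqrt (x * x + y * y)).
Proof.
  intros HB x y H. destruct (in_disc_radius x y H) as [Hs Hxy].
  destruct (HB _ Hs) as [l [Hl HlB]].
  assert (Hb : abs_summable b) by (intros s' Hs'; destruct (HB s' Hs') as [l' [Hl' _]]; eauto).
  eapply Rle_trans; [|exact HlB].
  apply (infinite_sum_abs_le _ _ _ _ (series_fun_spec b _ x y Hb Hs Hxy) Hl).
  intros k; apply series_term_abs_le; [apply Hs | exact Hxy].
Qed.

(** * Three partial-sum estimates *)

Lemma sum_head_le (X : nat -> R) G Y : (forall k, 1 <= X k) -> (forall k, X k + 1 <= X (S k)) ->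
  0 <= Y -> 0 <= G ->
  forall N, sum_f_R0 (fun k => if Rle_dec (X k) Y then G else 0) N <= Y * G.
Proof.
  intros H1 Hinc HY HG N.
  enough (H : sum_f_R0 (fun k => if Rle_dec (X k) Y then G else 0) N <= X N * G /\
              sum_f_R0 (fun k => if Rle_dec (X k) Y then G else 0) N <= Y * G) by apply H.
  induction N as [|N IH]; simpl.
  - pose proof (H1 0%nat). destruct (Rle_dec (X 0%nat) Y); split; nra.
  - pose proof (Hinc N). pose proof (H1 N). destruct (Rle_dec (X (S N)) Y); split; nra.
Qed.

(* Invariant: [S_N <= (lam - e_N) / (lam - 1)], and [S_N = 0] before the first nonzero term. *)
Lemma sum_geometric_decay_le (e : nat -> R) lam : lam > 1 ->
  (forall k, 0 <= e k <= 1) -> (forall k, e k <> 0 -> lam * e (S k) <= e k) ->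
  (forall k, e (S k) = 0 -> e k = 0) ->
  forall N, sum_f_R0 e N <= lam / (lam - 1).
Proof.
  intros Hlam Hbnd Hdecay Hsupp.
  assert (Hfirst : forall k, e k <= (lam - e k) / (lam - 1)).
  { intros k. pose proof (Hbnd k). apply Rmult_le_reg_r with (lam - 1); [lra|].
    replace ((lam - e k) / (lam - 1) * (lam - 1)) with (lam - e k) by (field; lra). nra. }
  assert (I : forall N, sum_f_R0 e N <= (lam - e N) / (lam - 1) /\ (e N = 0 -> sum_f_R0 e N = 0)).
  { induction N as [|N [IH1 IH2]]; simpl; [split; auto|].
    split.
    - destruct (Req_dec (e N) 0) as [Hz|Hnz].
      + rewrite (IH2 Hz), Rplus_0_l. apply Hfirst.
      + specialize (Hdecay N Hnz).
        apply Rle_trans with ((lam - e N) / (lam - 1) + e (S N)); [lra|].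
        apply Rmult_le_reg_r with (lam - 1); [lra|].
        replace (((lam - e N) / (lam - 1) + e (S N)) * (lam - 1))
          with (lam - e N + (lam - 1) * e (S N)) by (field; lra).
        replace ((lam - e (S N)) / (lam - 1) * (lam - 1)) with (lam - e (S N)) by (field; lra).
        lra.
    - intros Hz. rewrite Hz, (IH2 (Hsupp N Hz)); ring. }
  intros N. destruct (I N) as [H _]. pose proof (Hbnd N).
  apply Rle_trans with (1 := H). unfold Rdiv; apply Rmult_le_compat_r; [|lra].
  left; apply Rinv_0_lt_compat; lra.
Qed.

(* Invariant: [S_N <= c g(X_N)] while [X_N <= T], and [S_N = 0] while [X_N <= Y]; [c = 1 + c/A]. *)
Lemma sum_geometric_window_le (X : nat -> R) (g : R -> R) Y T A : A > 1 ->
  (forall k, 1 <= X k) -> (forall k, X k <= X (S k)) -> 1 <= T ->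
  (forall a b, 1 <= a -> a <= b -> g a <= g b) -> (forall a, 1 <= a -> 0 <= g a) ->
  (forall k, Y < X k -> A * g (X k) <= g (X (S k))) ->
  forall N, sum_f_R0 (fun k => if Rlt_dec Y (X k) then
                                 if Rle_dec (X k) T then g (X k) else 0 else 0) N
            <= A / (A - 1) * g T.
Proof.
  intros HA H1 Hinc HT Hmono Hpos Hgrow.
  set (c := A / (A - 1)).
  assert (Hc1 : 1 <= c).
  { unfold c. apply Rmult_le_reg_r with (A - 1); [lra|].
    unfold Rdiv; rewrite Rmult_assoc, Rinv_l by lra; lra. }
  assert (Hc : c / A + 1 = c) by (unfold c; field; lra).
  assert (HgT := Hpos T HT).
  set (b := fun k => if Rlt_dec Y (X k) then if Rle_dec (X k) T then g (X k) else 0 else 0).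
  assert (I : forall N, sum_f_R0 b N <= c * g T /\
             (X N <= T -> sum_f_R0 b N <= c * g (X N)) /\ (X N <= Y -> sum_f_R0 b N = 0)).
  { induction N as [|N [IH1 [IH2 IH3]]]; simpl; unfold b.
    - pose proof (Hpos _ (H1 0%nat)).
      destruct (Rlt_dec Y (X 0%nat)); [destruct (Rle_dec (X 0%nat) T)|].
      + pose proof (Hmono _ _ (H1 0%nat) r0). repeat split; intros; nra.
      + repeat split; intros; nra.
      + repeat split; intros; nra.
    - fold b. pose proof (Hinc N). pose proof (Hpos _ (H1 N)). pose proof (Hpos _ (H1 (S N))).
      destruct (Rlt_dec Y (X (S N))) as [HY|HY]; [destruct (Rle_dec (X (S N)) T) as [HXT|HXT]|].
      + assert (Hstep : sum_f_R0 b N + g (X (S N)) <= c * g (X (S N))).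
        { destruct (Rle_dec (X N) Y) as [HN|HN].
          - rewrite (IH3 HN). nra.
          - specialize (Hgrow N ltac:(lra)). specialize (IH2 ltac:(lra)).
            assert (c * g (X N) <= c / A * g (X (S N))).
            { replace (c * g (X N)) with (c / A * (A * g (X N))) by (field; lra).
              apply Rmult_le_compat_l; [apply Rmult_le_pos; [lra | left; apply Rinv_0_lt_compat; lra]|].
              exact Hgrow. }
            nra. }
        pose proof (Hmono _ _ (H1 (S N)) HXT). repeat split; intros; nra.
      + repeat split; intros; nra.
      + assert (HN : X N <= Y) by lra. rewrite (IH3 HN). repeat split; intros; nra. }
  intros N. apply I.
Qed.

Lemma sum_lacunary_tail_le (X : nat -> R) t lam : lam > 1 -> 0 < t ->
  (forall k, 1 <= X k) -> (forall k, X (S k) >= lam * X k) ->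
  forall N, sum_f_R0 (fun k => if Rlt_dec (/ t) (X k) then / (X k * t) else 0) N
            <= lam / (lam - 1).
Proof.
  intros Hlam Ht H1 Hgap.
  assert (Hbig : forall x, / t < x -> 1 < x * t).
  { intros x Hx. apply Rmult_lt_compat_r with (r := t) in Hx; auto. rewrite Rinv_l in Hx; lra. }
  apply sum_geometric_decay_le; auto.
  - intros k. destruct (Rlt_dec (/ t) (X k)) as [h|h]; [|lra].
    pose proof (Hbig _ h). split; [left; apply Rinv_0_lt_compat; lra|].
    rewrite <- Rinv_1. left; apply Rinv_lt_contravar; lra.
  - intros k. pose proof (Hgap k). pose proof (H1 k).
    destruct (Rlt_dec (/ t) (X k)) as [h|h]; [|lra]. intros _.
    destruct (Rlt_dec (/ t) (X (S k))) as [h'|h']; [|nra].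
    pose proof (Hbig _ h). pose proof (Hbig _ h').
    apply Rmult_le_reg_r with (X k * t * (X (S k) * t)); [nra|].
    replace (lam * / (X (S k) * t) * (X k * t * (X (S k) * t))) with (lam * X k * t) by (field; nra).
    replace (/ (X k * t) * (X k * t * (X (S k) * t))) with (X (S k) * t) by (field; nra).
    nra.
  - intros k. pose proof (Hgap k). pose proof (H1 k).
    destruct (Rlt_dec (/ t) (X (S k))) as [h|h].
    + pose proof (Hbig _ h). intros Hz. exfalso.
      assert (0 < / (X (S k) * t)) by (apply Rinv_0_lt_compat; lra). lra.
    + destruct (Rlt_dec (/ t) (X k)); [nra | auto].
Qed.

(** * The weight [g(x) = v(1 - 1/x)] *)

Lemma exp_pow a n : exp a ^ n = exp (INR n * a).
Proof.
  induction n as [|n IH]; [simpl; rewrite Rmult_0_l, exp_0; reflexivity|].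
  simpl pow. rewrite IH, <- exp_plus, S_INR. f_equal; ring.
Qed.

Lemma one_minus_pow_le_exp t n : 0 < t <= 1 -> (1 - t) ^ n <= exp (- (INR n * t)).
Proof.
  intros Ht. replace (- (INR n * t)) with (INR n * - t) by ring. rewrite <- exp_pow.
  apply pow_incr. pose proof (exp_ineq1_le (- t)); lra.
Qed.

Lemma pow_le_exp N s : (1 <= N)%nat -> 0 <= s -> s ^ N <= INR N ^ N * exp s.
Proof.
  intros HN Hs. assert (HN' : 1 <= INR N) by (apply (le_INR 1); auto).
  replace (exp s) with (exp (s / INR N) ^ N) by (rewrite exp_pow; f_equal; field; lra).
  replace (s ^ N) with (INR N ^ N * (s / INR N) ^ N)
    by (rewrite <- Rpow_mult_distr; f_equal; field; lra).
  apply Rmult_le_compat_l; [apply pow_le; lra|].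
  apply pow_incr. split; [apply Rmult_le_pos; [lra | left; apply Rinv_0_lt_compat; lra]|].
  pose proof (exp_ineq1_le (s / INR N)); lra.
Qed.

Lemma pow_mul_exp_neg_le p s : 0 < s -> s ^ p * exp (- s) <= INR (S p) ^ S p / s.
Proof.
  intros Hs. pose proof (pow_le_exp (S p) s ltac:(lia) ltac:(lra)). pose proof (exp_pos s).
  rewrite exp_Ropp. apply Rmult_le_reg_r with (s * exp s); [nra|].
  replace (s ^ p * / exp s * (s * exp s)) with (s ^ S p) by (simpl; field; lra).
  replace (INR (S p) ^ S p / s * (s * exp s)) with (INR (S p) ^ S p * exp s) by (field; lra).
  exact H.
Qed.

Section Weight.

Variable v : R -> R.
Hypothesis Hv : standing_weight v.

Lemma weight_ge1 r : 0 <= r < 1 -> 1 <= v r.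
Proof. destruct Hv as [_ [H _]]; auto. Qed.

Lemma weight_le r s : 0 <= r -> r <= s -> s < 1 -> v r <= v s.
Proof.
  destruct Hv as [_ [_ [Hinc _]]]; intros Hr Hrs Hs.
  destruct (Req_dec r s) as [->|Hne]; [lra | left; apply Hinc; lra].
Qed.

Lemma one_minus_inv_range a : 1 <= a -> 0 <= 1 - / a < 1.
Proof.
  intros Ha. assert (0 < / a) by (apply Rinv_0_lt_compat; lra).
  assert (/ a <= 1) by (rewrite <- Rinv_1; apply Rinv_le_contravar; lra). lra.
Qed.

Lemma gfun_ge1 a : 1 <= a -> 1 <= gfun v a.
Proof. intros Ha. apply weight_ge1, one_minus_inv_range, Ha. Qed.

Lemma gfun_le a b : 1 <= a -> a <= b -> gfun v a <= gfun v b.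
Proof.
  intros Ha Hab. pose proof (one_minus_inv_range a Ha); pose proof (one_minus_inv_range b ltac:(lra)).
  assert (/ b <= / a) by (apply Rinv_le_contravar; lra).
  apply weight_le; lra.
Qed.

Lemma gfun_inv t : 0 < t -> gfun v (/ t) = v (1 - t).
Proof. intros; unfold gfun; rewrite Rinv_inv; reflexivity. Qed.

Lemma gfun_double_le D : (forall d, 0 < d <= 1/2 -> v (1 - d) <= D * v (1 - 2 * d)) ->
  forall z, 1 <= z -> gfun v (2 * z) <= D * gfun v z.
Proof.
  intros H z Hz. unfold gfun.
  replace (/ z) with (2 * / (2 * z)) by (field; lra).
  apply H. split; [apply Rinv_0_lt_compat; lra|].
  apply Rle_trans with (/ 2); [apply Rinv_le_contravar|]; lra.
Qed.

Lemma pow2_ge_succ j : INR j + 1 <= 2 ^ j.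
Proof. induction j; [simpl; lra|]. rewrite S_INR; simpl pow. pose proof (pos_INR j); lra. Qed.

Definition gfun_poly_bounded (p : nat) :=
  forall x y, 1 <= y -> y <= x -> gfun v x <= 2 ^ p * (x / y) ^ p * gfun v y.

(* Iterate the doubling condition along [x, x/2, x/4, ...] down to [y]. *)
Lemma gfun_poly_growth D : (forall d, 0 < d <= 1/2 -> v (1 - d) <= D * v (1 - 2 * d)) ->
  exists p, gfun_poly_bounded p.
Proof.
  intros HD. destruct (INR_unbounded D) as [p Hp]. exists p.
  assert (HDp : D <= 2 ^ p) by (pose proof (pow2_ge_succ p); lra).
  assert (H2p : 1 <= 2 ^ p) by (apply pow_R1_Rle; lra).
  assert (Hratio : forall x y, 1 <= y -> y <= x -> 1 <= (x / y) ^ p).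
  { intros x y Hy Hyx. apply pow_R1_Rle. apply Rmult_le_reg_r with y; [lra|].
    unfold Rdiv; rewrite Rmult_assoc, Rinv_l by lra; lra. }
  assert (key : forall j x y, 1 <= y -> y <= x -> x <= 2 ^ j * y ->
      gfun v x <= 2 ^ p * (x / y) ^ p * gfun v y).
  { induction j as [|j IH]; intros x y Hy Hyx Hxj.
    - simpl in Hxj. replace x with y by lra. rewrite Rdiv_diag by lra. rewrite pow1.
      pose proof (gfun_ge1 y Hy); nra.
    - pose proof (Hratio x y Hy Hyx). pose proof (gfun_ge1 y Hy).
      destruct (Rle_dec x (2 * y)) as [Hx2|Hx2].
      + apply Rle_trans with (D * gfun v y).
        * apply Rle_trans with (gfun v (2 * y)); [apply gfun_le; lra | apply (gfun_double_le D HD y Hy)].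
        * apply Rle_trans with (2 ^ p * gfun v y * 1); [nra|].
          replace (2 ^ p * (x / y) ^ p * gfun v y) with (2 ^ p * gfun v y * (x / y) ^ p) by ring.
          apply Rmult_le_compat_l; nra.
      + specialize (IH (x / 2) y Hy ltac:(lra) ltac:(simpl in Hxj; lra)).
        pose proof (gfun_ge1 (x / 2) ltac:(lra)).
        replace x with (2 * (x / 2)) at 1 by field.
        eapply Rle_trans; [apply (gfun_double_le D HD); lra|].
        replace ((x / y) ^ p) with (2 ^ p * (x / 2 / y) ^ p)
          by (rewrite <- Rpow_mult_distr; f_equal; field; lra).
        apply Rle_trans with (2 ^ p * gfun v (x / 2)); [apply Rmult_le_compat_r; lra|].
        replace (2 ^ p * (2 ^ p * (x / 2 / y) ^ p) * gfun v y)
          with (2 ^ p * (2 ^ p * (x / 2 / y) ^ p * gfun v y)) by ring.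
        apply Rmult_le_compat_l; lra. }
  intros x y Hy Hyx. destruct (INR_unbounded x) as [j Hj].
  apply (key j); auto. pose proof (pow2_ge_succ j); nra.
Qed.

(* For [n > 1/t] the factor [(1-t)^n ~ exp(-nt)] beats the polynomial growth of [g]. *)
Lemma gfun_mul_pow_le_tail p x t m : gfun_poly_bounded p ->
  0 < t <= 1 -> / t < x -> INR m = x ->
  gfun v x * (1 - t) ^ m <= 2 ^ p * INR (S p) ^ S p * v (1 - t) / (x * t).
Proof.
  intros Hp Ht Hx Hm.
  assert (HT : 1 <= / t) by (rewrite <- Rinv_1; apply Rinv_le_contravar; lra).
  assert (Hs : 1 < x * t).
  { apply Rmult_lt_reg_r with (/ t); [apply Rinv_0_lt_compat; lra|].
    rewrite Rmult_assoc, Rinv_r by lra; lra. }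
  assert (Hg : gfun v x <= 2 ^ p * (x * t) ^ p * v (1 - t)).
  { rewrite <- (gfun_inv t) by lra. replace (x * t) with (x / / t) by (unfold Rdiv; rewrite Rinv_inv; ring).
    apply Hp; lra. }
  assert (Hpow : (1 - t) ^ m <= exp (- (x * t))) by (rewrite <- Hm; apply one_minus_pow_le_exp; lra).
  pose proof (pow_mul_exp_neg_le p (x * t) ltac:(lra)).
  pose proof (weight_ge1 (1 - t) ltac:(lra)). pose proof (gfun_ge1 x ltac:(lra)).
  pose proof (pow_le (1 - t) m ltac:(lra)). pose proof (pow_le (x * t) p ltac:(lra)).
  assert (0 < 2 ^ p) by (apply pow_lt; lra).
  apply Rle_trans with (2 ^ p * v (1 - t) * ((x * t) ^ p * exp (- (x * t)))).
  - apply Rle_trans with (2 ^ p * (x * t) ^ p * v (1 - t) * (1 - t) ^ m); [nra|].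
    replace (2 ^ p * v (1 - t) * ((x * t) ^ p * exp (- (x * t))))
      with (2 ^ p * (x * t) ^ p * v (1 - t) * exp (- (x * t))) by ring.
    apply Rmult_le_compat_l; nra.
  - replace (2 ^ p * INR (S p) ^ S p * v (1 - t) / (x * t))
      with (2 ^ p * v (1 - t) * (INR (S p) ^ S p / (x * t))) by (field; lra).
    apply Rmult_le_compat_l; nra.
Qed.

Lemma gfun_mul_pow_split p Y x r m : gfun_poly_bounded p -> 1 <= Y -> 1 <= x -> INR m = x ->
  0 <= r < 1 ->
  gfun v x * r ^ m <=
    (if Rle_dec x Y then gfun v Y else 0) +
    (if Rlt_dec Y x then if Rle_dec x (/ (1 - r)) then gfun v x else 0 else 0) +
    2 ^ p * INR (S p) ^ S p * v r * (if Rlt_dec (/ (1 - r)) x then / (x * (1 - r)) else 0).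
Proof.
  intros Hp HY Hx Hm Hr.
  pose proof (pow_le r m ltac:(lra)).
  assert (r ^ m <= 1) by (apply Rle_trans with (1 ^ m); [apply pow_incr; lra | rewrite pow1; lra]).
  pose proof (gfun_ge1 x Hx). pose proof (gfun_ge1 Y HY). pose proof (weight_ge1 r Hr).
  assert (0 < 2 ^ p * INR (S p) ^ S p)
    by (apply Rmult_lt_0_compat; apply pow_lt; [lra | apply lt_0_INR; lia]).
  assert (Hnonneg : 0 <= 2 ^ p * INR (S p) ^ S p * v r *
                          (if Rlt_dec (/ (1 - r)) x then / (x * (1 - r)) else 0)).
  { apply Rmult_le_pos; [nra|]. destruct (Rlt_dec (/ (1 - r)) x); [|lra].
    left; apply Rinv_0_lt_compat; nra. }
  destruct (Rle_dec x Y) as [h1|h1].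
  - pose proof (gfun_le x Y Hx h1).
    destruct (Rlt_dec Y x); [lra|]. nra.
  - destruct (Rlt_dec Y x) as [h2|h2]; [|lra].
    destruct (Rle_dec x (/ (1 - r))) as [h3|h3]; [nra|].
    destruct (Rlt_dec (/ (1 - r)) x) as [h4|h4]; [|lra].
    pose proof (gfun_mul_pow_le_tail p x (1 - r) m Hp ltac:(lra) h4 Hm) as Htail.
    replace (1 - (1 - r)) with r in Htail by ring.
    replace (2 ^ p * INR (S p) ^ S p * v r * / (x * (1 - r)))
      with (2 ^ p * INR (S p) ^ S p * v r / (x * (1 - r))) by (unfold Rdiv; ring).
    lra.
Qed.

End Weight.

(** * Hadamard gap series *)

Lemma hadamard_gap_increasing (n : nat -> nat) lambda : lambda > 1 -> (1 <= n 0)%nat ->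
  (forall k, INR (n (S k)) >= lambda * INR (n k)) ->
  forall k, 1 <= INR (n k) /\ INR (n k) + 1 <= INR (n (S k)).
Proof.
  intros Hlam Hn0 Hgap.
  assert (H1 : forall k, 1 <= INR (n k)).
  { induction k as [|k IH]; [apply (le_INR 1); exact Hn0 | pose proof (Hgap k); nra]. }
  intros k. split; [apply H1|]. pose proof (Hgap k). pose proof (H1 k).
  assert (Hlt : (n k < n (S k))%nat) by (apply INR_lt; nra).
  apply le_INR in Hlt. rewrite S_INR in Hlt. exact Hlt.
Qed.

Definition gfun_uniform_growth (v : R -> R) :=
  forall q, q > 1 -> exists A, A > 1 /\ exists y0,
    forall y x, y > y0 -> 1 <= y -> x > q * y -> gfun v x > A * gfun v y.

Lemma gap_weight_sum_le (v : R -> R) (n : nat -> nat) lambda :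
  standing_weight v -> doubling v -> gfun_uniform_growth v ->
  lambda > 1 -> (1 <= n 0)%nat -> (forall k, INR (n (S k)) >= lambda * INR (n k)) ->
  exists K, K > 0 /\ forall r, 0 <= r < 1 -> forall N,
    sum_f_R0 (fun k => gfun v (INR (n k)) * r ^ n k) N <= K * v r.
Proof.
  intros Hv [D [_ HD]] Hg Hlam Hn0 Hgap.
  destruct (gfun_poly_growth v Hv D HD) as [p Hp].
  pose proof (hadamard_gap_increasing n lambda Hlam Hn0 Hgap) as HX.
  destruct (Hg ((1 + lambda) / 2) ltac:(lra)) as [A [HA [y0 Hy0]]].
  set (Y := Rmax y0 1). assert (HY : 1 <= Y) by apply Rmax_r.
  assert (Hgrow : forall k, Y < INR (n k) -> A * gfun v (INR (n k)) <= gfun v (INR (n (S k)))).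
  { intros k Hk. pose proof (Rmax_l y0 1). pose proof (Hgap k). pose proof (HX k).
    left; apply Hy0; unfold Y in *; nra. }
  set (Kc := 2 ^ p * INR (S p) ^ S p).
  assert (HKc : 0 <= Kc) by (unfold Kc; apply Rmult_le_pos; apply pow_le; [lra | apply pos_INR]).
  pose proof (gfun_ge1 v Hv Y HY).
  assert (0 < A / (A - 1)) by (apply Rdiv_lt_0_compat; lra).
  assert (0 < lambda / (lambda - 1)) by (apply Rdiv_lt_0_compat; lra).
  exists (Y * gfun v Y + A / (A - 1) + Kc * (lambda / (lambda - 1)) + 1).
  split; [nra|]. intros r Hr N.
  pose proof (weight_ge1 v Hv r Hr).
  eapply Rle_trans.
  { apply sum_Rle; intros k _. apply (gfun_mul_pow_split v Hv p Y); auto; apply HX. }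
  rewrite !plus_sum, sum_f_R0_scal_l.
  pose proof (sum_head_le (fun k => INR (n k)) (gfun v Y) Y (fun k => proj1 (HX k))
                (fun k => proj2 (HX k)) ltac:(lra) ltac:(lra) N) as Hhead.
  pose proof (sum_geometric_window_le (fun k => INR (n k)) (gfun v) Y (/ (1 - r)) A HA
                (fun k => proj1 (HX k)) ltac:(intros k; pose proof (HX k); lra)
                ltac:(rewrite <- Rinv_1; apply Rinv_le_contravar; lra)
                (gfun_le v Hv) ltac:(intros a Ha; pose proof (gfun_ge1 v Hv a Ha); lra) Hgrow N) as Hwindow.
  pose proof (sum_lacunary_tail_le (fun k => INR (n k)) (1 - r) lambda Hlam ltac:(lra)
                (fun k => proj1 (HX k)) Hgap N) as Htail.
  rewrite gfun_inv in Hwindow by lra. replace (1 - (1 - r)) with r in Hwindow by ring.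
  cbv beta in *. fold Kc.
  set (St := sum_f_R0 _ N) in Htail |- *.
  assert (Kc * v r * St <= Kc * v r * (lambda / (lambda - 1))) by (apply Rmult_le_compat_l; nra).
  assert (Y * gfun v Y * 1 <= Y * gfun v Y * v r) by (apply Rmult_le_compat_l; nra).
  nra.
Qed.

Lemma Rabs_add_Rabs_le_2sqrt a b : Rabs a + Rabs b <= 2 * sqrt (a * a + b * b).
Proof.
  assert (Habs : forall p q, Rabs p <= sqrt (p * p + q * q)).
  { intros p q. rewrite <- sqrt_Rsqr_abs. apply sqrt_le_1_alt. unfold Rsqr; nra. }
  pose proof (Habs a b). pose proof (Habs b a). rewrite (Rplus_comm (b * b)) in *. lra.
Qed.

Theorem corollary5
  (v : R -> R) (Hv : standing_weight v) (Hd : doubling v)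
  (Hg : forall q, q > 1 -> exists A, A > 1 /\ exists y0,
          forall y x, y > y0 -> 1 <= y -> x > q * y -> gfun v x > A * gfun v y)
  (n : nat -> nat) (lambda : R) (Hlam : lambda > 1)
  (Hn0 : (1 <= n 0)%nat)
  (Hgap : forall k, INR (n (S k)) >= lambda * INR (n k))
  (ar ai : nat -> R) (C : R)
  (Hcoef : forall k, sqrt (ar k * ar k + ai k * ai k) <= C * gfun v (INR (n k))) :
  exists u : R -> R -> R,
    (forall x y, in_disc x y ->
       infinite_sum (fun k => re_term (ar k) (ai k) (n k) x y) (u x y)) /\
    in_h_inf_v v u.
Proof.
  destruct (gap_weight_sum_le v n lambda Hv Hd Hg Hlam Hn0 Hgap) as [K [HK Hsum]].
  pose proof (fun k => gfun_ge1 v Hv _ (proj1 (hadamard_gap_increasing n lambda Hlam Hn0 Hgap k)))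
    as Hg1.
  assert (HC : 0 <= C) by (pose proof (Hcoef 0%nat); pose proof (Hg1 0%nat);
                           pose proof (sqrt_pos (ar 0%nat * ar 0%nat + ai 0%nat * ai 0%nat)); nra).
  set (b := mk_re_power_series ar ai n).
  assert (Hrad : forall s, 0 <= s < 1 -> exists l,
            infinite_sum (fun k => coef_norm b k * s ^ expo b k) l /\ l <= 2 * C * K * v s).
  { apply radial_sum_bound with (w := fun k => 2 * C * gfun v (INR (n k))).
    - intros k. pose proof (Hcoef k). pose proof (Rabs_add_Rabs_le_2sqrt (ar k) (ai k)).
      unfold coef_norm; simpl; lra.
    - intros s Hs N. simpl.
      apply Rle_trans with (2 * C * sum_f_R0 (fun k => gfun v (INR (n k)) * s ^ n k) N).
      + rewrite <- sum_f_R0_scal_l. apply Req_le, sum_eq; intros; ring.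
      + replace (2 * C * K * v s) with (2 * C * (K * v s)) by ring.
        apply Rmult_le_compat_l; [lra | apply Hsum, Hs]. }
  assert (Hb : abs_summable b) by (intros s Hs; destruct (Hrad s Hs) as [l [Hl _]]; eauto).
  exists (series_fun b). split; [|split].
  - intros x y H. exact (series_fun_spec_disc b x y Hb H).
  - exact (series_fun_harmonic b Hb).
  - exists (2 * C * K + 1). split; [nra|]. intros x y H.
    eapply Rle_trans; [exact (series_fun_abs_le_radial b _ Hrad x y H)|].
    pose proof (weight_ge1 v Hv _ (proj1 (in_disc_radius x y H))). nra.
Qed.
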